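(* Let $(\Omega,\mathcal A)$ be a measurable space and let $K$ be a random compact set in $\mathbb C^n$. If $K$ takes countably many values, or if $\left|\bigcup_{\omega\in\Omega}K(\omega)\setminus\overline{\operatorname{int}K(\omega)}\right|\le\aleph_0$, then $K$ is uniformly separable. Moreover, if $K(\omega)$ is the closure of a bounded open subset of $\mathbb C^n$ for all $\omega\in\Omega$, then $K$ is uniformly separable.
   Context: A random compact set is a measurable map from $\Omega$ to the space of non-empty compact subsets of $\mathbb C^n$ with the Hausdorff distance and its Borel $\sigma$-algebra. A random compact set $K$ is uniformly separable if there is a countable set $E\subset\mathbb C^n$ such that $E\cap K(\omega)$ is dense in $K(\omega)$ for every $\omega\in\Omega$. *)

(* C^n is modelled as row vectors 'rV[R[i]]_n over
   the complex numbers R[i] (mathcomp-real-closed) of an arbitrary realType R. *)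
From HB Require Import structures.
From mathcomp Require Import all_boot all_order all_algebra.
From mathcomp Require Import all_classical all_reals all_analysis.
From mathcomp Require Import complex.
Import Order.TTheory GRing.Theory Num.Theory.
Import numFieldNormedType.Exports.

Set Implicit Arguments.
Unset Strict Implicit.
Unset Printing Implicit Defensive.

Local Open Scope ring_scope.
Local Open Scope classical_set_scope.

(* The complex numbers R[i] carry the standard metric topology of a
   numFieldType (ball z e w <-> |z - w| < e); 'rV[R[i]]_n then carries the
   product topology, i.e. the usual topology of C^n. *)
HB.instance Definition _ (R : rcfType) :=
  PseudoPointedMetric.copy (complex R) (complex R)^o.

Notation Cn R n := ('rV[(complex R)]_n).

Definition edist (R : realType) (n : nat) (x y : Cn R n) : R :=
  Num.sqrt (\sum_(i < n) (Normc.normc (x ord0 i - y ord0 i)) ^+ 2).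

Definition nonempty_compacts (R : realType) (n : nat) : set (set (Cn R n)) :=
  [set A | A !=set0 /\ compact A].

(* For non-empty compact A, B : d_H(A,B) < e  iff  this holds. *)
Definition hausdorff_lt (R : realType) (n : nat) (e : R) (A B : set (Cn R n)) :=
  (forall x, A x -> exists2 y, B y & edist x y < e) /\
  (forall y, B y -> exists2 x, A x & edist x y < e).

Arguments nonempty_compacts : clear implicits.

Definition hausdorff_open (R : realType) (n : nat) (U : set (set (Cn R n))) :=
  U `<=` nonempty_compacts R n /\
  forall A, U A -> exists2 e : R, 0 < e &
    forall B, nonempty_compacts R n B -> hausdorff_lt e A B -> U B.

Definition hausdorff_borel (R : realType) (n : nat) : set (set (set (Cn R n))) :=
  <<s nonempty_compacts R n, (fun U : set (set (Cn R n)) => hausdorff_open U) >>.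

Arguments hausdorff_borel : clear implicits.

Definition random_compact_set (d : measure_display) (T : measurableType d)
    (R : realType) (n : nat) (K : T -> set (Cn R n)) : Prop :=
  (forall w, nonempty_compacts R n (K w)) /\
  (forall B, hausdorff_borel R n B -> measurable (K @^-1` B)).

(* Uniform separability: a countable E such that E `&` K w is dense in K w
   (for the closed set K w this means K w is contained in closure (E `&` K w)). *)
Definition uniformly_separable (T : Type) (R : realType) (n : nat)
    (K : T -> set (Cn R n)) : Prop :=
  exists2 E : set (Cn R n), countable E &
    forall w, K w `<=` closure (E `&` K w).

(* Every compact subset of C^n is separable, since the uniformity of C^n has a
   countable base; so if K takes countably many values, the union of countable
   dense subsets of these values works.  Otherwise take E = D u B, where D is
   the countable dense set of points with Gaussian-rational coordinates and B
   is the union of the sets K w minus the closure of int K w: a point of K w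
   outside B is a limit of interior points of K w, each of which is a limit of
   points of D lying in int K w.  When every K w is the closure of an open
   set, B is empty because such closures are regular closed. *)

From HB Require Import structures.
From mathcomp Require Import all_boot all_order all_algebra.
From mathcomp Require Import all_classical all_reals all_analysis.
From mathcomp Require Import complex finmap lra.
Import Order.TTheory GRing.Theory Num.Theory.
Import numFieldNormedType.Exports.
Local Open Scope ring_scope.
Local Open Scope classical_set_scope.

Lemma countable_setU (T : Type) (A B : set T) :
  countable A -> countable B -> countable (A `|` B).
Proof.
move=> cA cB; rewrite -bigcup2E.
by apply: bigcup_countable => // -[|[|k]] _ //=; exact: countable0.
Qed.

Definition separable_set {X : topologicalType} (A : set X) :=
  exists2 S : set X, countable S & S `<=` A /\ A `<=` closure S.

Section UniformSeparability.
Variables (X : topologicalType) (I : Type) (K : I -> set X).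

Lemma uniformly_separable_of_countable_range :
  countable (range K) -> (forall i, separable_set (K i)) ->
  exists2 E : set X, countable E & forall i, K i `<=` closure (E `&` K i).
Proof.
move=> cK sepK.
have /choice[S hS] : forall A : set X, exists S : set X,
    range K A -> [/\ countable S, S `<=` A & A `<=` closure S].
  move=> A; have [[i _ <-]|nKA] := pselect (range K A); last by exists set0 => /nKA.
  by have [S cS [SK KS]] := sepK i; exists S.
exists (\bigcup_(A in range K) S A).
  by apply: bigcup_countable => // A /hS[].
move=> i; have [_ SK KS] := hS (K i) (imageT K i).
apply: subset_trans KS (closureS _) => x Sx; split; last exact: SK.
by exists (K i) => //; exists i.
Qed.

Lemma uniformly_separable_of_countable_residue (D : set X) :
  countable D -> dense D ->
  countable (\bigcup_(i in [set: I]) (K i `\` closure (K i)°)) ->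
  exists2 E : set X, countable E & forall i, K i `<=` closure (E `&` K i).
Proof.
set B := \bigcup_(i in _) _ => cD dD cB.
exists (D `|` B); first exact: countable_setU.
move=> i x Kx; have [Bx|nBx] := pselect (B x).
  by apply: subset_closure; split => //; right.
have clx : closure (K i)° x by apply: contrapT => nclx; apply: nBx; exists i.
move=> N /nbhs_interior Nx.
have [y [[Kiy Ny] Dy]] : ((K i)° `&` N°) `&` D !=set0.
  apply: dD; last by apply: openI; exact: open_interior.
  exact: clx _ Nx.
exists y; split; last exact: interior_subset Ny.
by split; [left | exact: interior_subset Kiy].
Qed.

End UniformSeparability.

Lemma compact_separable (U : puniformType) (A : set U) :
  countable_uniformity U -> compact A -> separable_set A.
Proof.
move=> /countable_uniformityP[f f_small f_ent] cA.
have net k : exists F : {fset U},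
    [set` F] `<=` A /\ A `<=` \bigcup_(y in [set` F]) (xsection (f k) y)°.
  move: cA; rewrite compact_cover => /(_ _ A (fun y => (xsection (f k) y)°)).
  case=> [y _|x Ax|F FA AF]; first exact: open_interior.
  - by exists x => //; have [] := open_nbhs_entourage x (f_ent k).
  by exists F; split=> // y yF; have := FA y yF; rewrite in_setE.
have /choice[F hF] := net.
exists (\bigcup_(k in setT) [set` F k]).
  by apply: bigcup_countable => // k _; exact: countable_fset.
split=> [y [k _ yF]|x Ax N /nbhsP[E entE EN]]; first exact: (hF k).1.
have [k fkE] := f_small _ (entourage_inv entE).
have [y yF /interior_subset yx] := (hF k).2 x Ax.
by exists y; split; [exists k | apply: EN; move: yx; rewrite /xsection /= !in_setE; exact: fkE].
Qed.

Lemma complex_gt0_real (R : rcfType) (e : R[i]) :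
  0 < e -> exists2 a : R, 0 < a & e = a%:C%C.
Proof. by case: e => a b; rewrite ltcE /= => /andP[/eqP -> a0]; exists a. Qed.

Lemma countable_uniformity_metricC {R : realType} {T : pseudoMetricType R[i]} :
  countable_uniformity T.
Proof.
apply/countable_uniformityP.
exists (fun k => [set xy : T * T | ball xy.1 k.+1%:R^-1 xy.2]); last first.
  by move=> k; exact: (entourage_ball _ k.+1%:R^-1%:pos).
move=> E; rewrite -entourage_ballE => -[e /= /complex_gt0_real[a a0 ->] subE].
exists (Num.truncn a^-1); apply: subset_trans subE => xy; apply: le_ball.
rewrite -(rmorph_nat (real_complex R)) -fmorphV lecR.
by rewrite -[leRHS]invrK lef_pV2 ?posrE ?invr_gt0// ltW// truncnS_gt.
Qed.

Section RationalPoints.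
Variables (R : realType) (n : nat).

Lemma complex_rat_approx (z : R[i]) (e : R) : 0 < e ->
  exists pq : rat * rat, `|z - (ratr pq.1 +i* ratr pq.2)%C| < e%:C%C.
Proof.
move=> e0; case: z => a b.
have rat_approx (c : R) : exists q : rat, `|c - ratr q| < e / 2.
  have /rat_in_itvoo[q] : c - e / 2 < c + e / 2 by lra.
  by rewrite in_itv /= => /andP[cq qc]; exists q; rewrite ltr_norml; apply/andP; split; lra.
have [[p hp] [q hq]] := (rat_approx a, rat_approx b).
exists (p, q); rewrite normc_def /= ltcR.
move: hp hq; rewrite !ltr_norml => /andP[h1 h2] /andP[h3 h4].
have hs : (a - ratr p) ^+ 2 + (b - ratr q) ^+ 2 < e ^+ 2 by nra.
by rewrite -[ltRHS](@ger0_norm _ e) ?ltW // -sqrtr_sqr ltr_sqrt // exprn_gt0.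
Qed.

Definition ratCn (f : {ffun 'I_n -> rat * rat}) : Cn R n :=
  \row_j (ratr (f j).1 +i* ratr (f j).2)%C.

Lemma countable_ratCn : countable (range ratCn).
Proof. exact: card_le_trans (card_image_le _ _) (countableP _). Qed.

Lemma dense_ratCn : dense (range ratCn).
Proof.
move=> O [x Ox] /(_ x Ox) /nbhs_ballP[e /= /complex_gt0_real[a a0 ea] xeO].
have /fin_all_exists[g hg] := fun j => complex_rat_approx (x ord0 j) a a0.
exists (ratCn (finfun g)); split; last by exists (finfun g).
apply: xeO; rewrite ea; split=> [|i j]; first by rewrite ltcR.
by rewrite (ord1 i) /ratCn mxE ffunE; exact: hg.
Qed.

End RationalPoints.

Theorem proposition7p2 (d : measure_display) (T : measurableType d)
    (R : realType) (n : nat) (K : T -> set (Cn R n)) :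
  random_compact_set K ->
  ((countable (range K) \/
    countable (\bigcup_(w in [set: T]) (K w `\` closure (interior (K w))))) ->
    uniformly_separable K) /\
  ((forall w, exists2 U : set (Cn R n), open U /\ bounded_set U & K w = closure U) ->
    uniformly_separable K).
Proof.
move=> [Kcompact _].
have of_residue := @uniformly_separable_of_countable_residue _ _ K _
  (countable_ratCn R n) (dense_ratCn R n).
split.
  case=> [cK|]; last exact: of_residue.
  apply: uniformly_separable_of_countable_range cK _ => w.
  apply: compact_separable (Kcompact w).2; exact: countable_uniformity_metricC.
move=> Kregular; apply: of_residue.
rewrite bigcup0 => [|w _]; first exact: countable0.
by have [U [oU _] ->] := Kregular w; rewrite closure_open_regclosed ?setDv.
Qed.
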